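(* Let $L$ be an allowable $2l$-cycle chain for $\mathcal H_{m,\mathcal B,S}$. Then the number of distinct $2l$-cycles in the Tanner graph of $\mathcal H_{m,\mathcal B,S}$ corresponding to $L$ equals $m/n(L)$.
   Context: Let $m\ge1$, $\mathcal B=[B_1,\ldots,B_k]$ a list of subsets of a finite set of row-block indices, and $s_{i,j}\in\mathbb{Z}_m$ for $i\in B_j$. $\mathcal H_{m,\mathcal B,S}$ is the block matrix whose $(i,j)$ block is the $m\times m$ circulant permutation matrix with entry $(x,y)$ equal to 1 iff $x\equiv y+s_{i,j}\pmod m$ when $i\in B_j$, and zero otherwise; its Tanner graph has check nodes $c(i,x)$, variable nodes $u(j,y)$, with $c(i,x)\sim u(j,y)$ iff $i\in B_j$ and $x\equiv y+s_{i,j}$. A $2l$-cycle chain ($l\ge2$) is $L=(i_0,j_0,\ldots,i_{l-1},j_{l-1})$, indices mod $l$, with $i_t,i_{t+1}\in B_{j_t}$, $i_t\ne i_{t+1}$, $j_t\ne j_{t+1}$, and $\sum_{t=0}^{l-1}(s_{i_t,j_t}-s_{i_{t+1},j_t})\equiv0\pmod m$. For $r\in\mathbb{Z}_m$: $x_0=r$, $y_t=x_t-s_{i_t,j_t}$, $x_{t+1}=y_t+s_{i_{t+1},j_t}$ (mod $m$), giving the closed walk $W_r=c(i_0,x_0),u(j_0,y_0),c(i_1,x_1),\ldots,u(j_{l-1},y_{l-1}),c(i_0,x_0)$; $L$ is allowable if for every $r$ the $2l$ vertices $c(i_t,x_t),u(j_t,y_t)$ are pairwise distinct, in which case $W_r$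 traces a $2l$-cycle (a subgraph) of the Tanner graph. A $2l$-cycle of the Tanner graph corresponds to $L$ if it is the cycle traced by $W_r$ for some $r\in\mathbb{Z}_m$. Let $e$ be the smallest integer in $\{1,\ldots,l\}$ such that $(i_{t+e},j_{t+e})=(i_t,j_t)$ for all $t$ (indices mod $l$); then $e\mid l$ and $n(L)=l/e$. *)

From HB Require Import structures.
From mathcomp Require Import all_boot all_order all_algebra.
Set Implicit Arguments. Unset Strict Implicit. Unset Printing Implicit Defensive.
Import GRing.Theory.
Local Open Scope ring_scope.

(* Z_m for m >= 1, represented as 'I_(m.-1).+1 (which equals 'I_m when 0 < m)
   with its canonical Z-module structure (addition mod m). *)
Notation Zm m := 'I_((m.-1).+1).

Section Chain.
(* a row-block indices 'I_a, k column-block indices 'I_k,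
   B j = B_j (subset of row-block indices), s i j = s_{i,j} in Z_m.
   A chain of length l is given by I, J : nat -> ..., of which only the
   values at 0..l-1 matter: indices are always taken mod l. *)
Variables (m a k : nat) (B : 'I_k -> {set 'I_a}) (s : 'I_a -> 'I_k -> Zm m).
Variables (l : nat) (I : nat -> 'I_a) (J : nat -> 'I_k).

Definition It (t : nat) : 'I_a := I (t %% l)%N.
Definition Jt (t : nat) : 'I_k := J (t %% l)%N.

Definition is_cycle_chain : Prop :=
  (2 <= l)%N /\
  (forall t : nat, (t < l)%N ->
     [/\ It t \in B (Jt t), It t.+1 \in B (Jt t),
         It t != It t.+1 & Jt t != Jt t.+1]) /\
  \sum_(t < l) (s (It t) (Jt t) - s (It t.+1) (Jt t)) = 0.

Fixpoint wx (r : Zm m) (t : nat) : Zm m :=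
  match t with
  | 0 => r
  | t'.+1 => wx r t' - s (It t') (Jt t') + s (It t) (Jt t')
  end.
Definition wy (r : Zm m) (t : nat) : Zm m := wx r t - s (It t) (Jt t).

Definition cnode (r : Zm m) (t : nat) : 'I_a * Zm m := (It t, wx r t).
Definition vnode (r : Zm m) (t : nat) : 'I_k * Zm m := (Jt t, wy r t).

Definition tanner_adj (c : 'I_a * Zm m) (u : 'I_k * Zm m) : bool :=
  (c.1 \in B u.1) && (c.2 == u.2 + s c.1 u.1).

(* L is allowable: for every r the 2l vertices c(i_t,x_t), u(j_t,y_t)
   (t = 0..l-1) are pairwise distinct (check and variable nodes are
   automatically distinct from each other). *)
Definition allowable : Prop :=
  forall r : Zm m, forall t1 t2 : 'I_l, t1 != t2 ->
    cnode r t1 != cnode r t2 /\ vnode r t1 != vnode r t2.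

(* the cycle (subgraph) traced by W_r, represented by its edge set;
   edges are pairs (check node, variable node). *)
Definition cycle_of (r : Zm m) : {set ('I_a * Zm m) * ('I_k * Zm m)} :=
  [set e | [exists t : 'I_l,
      (e == (cnode r t, vnode r t)) || (e == (cnode r t.+1, vnode r t))]].

Definition cycles_of_chain : {set {set ('I_a * Zm m) * ('I_k * Zm m)}} :=
  [set cycle_of r | r : Zm m].

Definition is_shift_period (e : nat) : bool :=
  [forall t : 'I_l, (It (t + e)%N == It t) && (Jt (t + e)%N == Jt t)].
Definition chain_e : nat := (find is_shift_period (iota 1 l)).+1.
Definition chain_n : nat := (l %/ chain_e)%N.
End Chain.

From Pilot Require Import Defs.
From mathcomp Require Import all_boot all_order all_algebra.
From mathcomp Require Import zify.
Set Implicit Arguments. Unset Strict Implicit. Unset Printing Implicit Defensive.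
Import GRing.Theory.

(* Write the walk from [r] as [r + d_t], with [d_t] the walk from [0].  If
   [p] is a period of the index sequence [(i_t, j_t)], the walk from [r + d_p]
   is the walk from [r] shifted by [p] steps, so [r] and [r + d_p] trace the
   same cycle.  Conversely, if the walks from [r] and [r'] trace the same
   cycle, the walk from [r'] must run along the one from [r], as consecutive
   nodes of a walk are distinct.  Running forwards from position [t] makes [t]
   a period, hence a multiple of [e], and [r' = r + d_t]; running backwards is
   impossible.  So the fibres of [r |-> cycle(W_r)] are the orbits of
   translation by [d_e], which by allowability has additive order exactly
   [n(L) = l / e], and there are [m / n(L)] cycles. *)

Lemma card_imset_mul_fiber (T U : finType) (f : T -> U) c :
  (forall x, #|[set y | f y == f x]| = c) -> #|[set f x | x : T]| * c = #|T|.
Proof.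
move=> fiber_c; have -> : #|T| = \sum_(x : T) 1 by rewrite sum1_card.
rewrite (partition_big f [in [set f x | x : T]]) /=.
  rewrite -sum_nat_const; apply: eq_bigr => _ /imsetP[x _ ->].
  by rewrite -(fiber_c x) sum1dep_card; apply: eq_card => y; rewrite inE.
by move=> x _; apply: imset_f.
Qed.

Lemma eqn_modS d p q : (p.+1 == q.+1 %[mod d]) = (p == q %[mod d]).
Proof. by rewrite -[p.+1]addn1 -[q.+1]addn1 eqn_modDr. Qed.

Lemma modnS_mod d p : (p %% d).+1 = p.+1 %[mod d].
Proof. by apply/eqP; rewrite eqn_modS modn_mod. Qed.

Section Walk.
Variables (m a k : nat) (s : 'I_a -> 'I_k -> Zm m).
Variables (l : nat) (I : nat -> 'I_a) (J : nat -> 'I_k).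

Local Notation It := (It l I).
Local Notation Jt := (Jt l J).
Local Notation cnode := (cnode s l I J).
Local Notation vnode := (vnode s l I J).

Definition chain_period (p : nat) : Prop :=
  forall u, It (p + u) = It u /\ Jt (p + u) = Jt u.

Lemma chain_period_mull q : chain_period (q * l).
Proof. by move=> u; rewrite /Defs.It /Defs.Jt modnMDl. Qed.

Lemma chain_period_l : chain_period l.
Proof. by rewrite -[l]mul1n; apply: chain_period_mull. Qed.

Lemma chain_periodD p q :
  chain_period p -> chain_period q -> chain_period (p + q).
Proof. by move=> hp hq u; rewrite -addnA; have [-> ->] := hp (q + u); apply: hq. Qed.

Lemma chain_periodDl p q :
  chain_period p -> chain_period (p + q) -> chain_period q.
Proof. by move=> hp hpq u; have [<- <-] := hp (q + u); rewrite addnA; apply: hpq. Qed.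

Lemma chain_period_mulr p q : chain_period p -> chain_period (q * p).
Proof.
move=> hp; elim: q => [|q IHq]; first by move=> u.
by rewrite mulSn; apply: chain_periodD.
Qed.

Definition walk_offset : nat -> Zm m := wx s l I J 0%R.

Lemma wx_offset r t : wx s l I J r t = (r + walk_offset t)%R.
Proof. by elim: t => [|t IHt] /=; rewrite ?addr0 // IHt !addrA. Qed.

Lemma walk_offsetE t :
  walk_offset t = (- \sum_(i < t) (s (It i) (Jt i) - s (It i.+1) (Jt i)))%R.
Proof.
elim: t => [|t IHt]; first by rewrite big_ord0 oppr0.
rewrite big_ord_recr /= {1}/walk_offset /= -/(walk_offset t) IHt.
by rewrite opprD opprB addrA addrAC.
Qed.

Lemma walk_offsetD p u :
  chain_period p -> walk_offset (p + u) = (walk_offset p + walk_offset u)%R.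
Proof.
move=> hp; elim: u => [|u IHu]; first by rewrite addn0 addr0.
rewrite addnS {1}/walk_offset /= -/(walk_offset (p + u)) IHu.
by have [-> ->] := hp u; rewrite -addnS; have [-> _] := hp u.+1; rewrite !addrA.
Qed.

Lemma cnode_shift r p u :
  chain_period p -> cnode r (p + u) = cnode (r + walk_offset p)%R u.
Proof.
move=> hp; rewrite /Defs.cnode !wx_offset walk_offsetD // addrA.
by have [-> _] := hp u.
Qed.

Lemma vnode_shift r p u :
  chain_period p -> vnode r (p + u) = vnode (r + walk_offset p)%R u.
Proof.
move=> hp; rewrite /Defs.vnode /wy !wx_offset walk_offsetD // addrA.
by have [-> ->] := hp u.
Qed.

Section MinimalPeriod.
Hypothesis l_gt0 : 0 < l.

Local Notation e := (chain_e l I J).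
Local Notation n := (chain_n l I J).

Lemma chain_periodP p : reflect (chain_period p) (is_shift_period l I J p).
Proof.
apply: (iffP forallP) => [h u | hp t].
  have /andP[/eqP hI /eqP hJ] := h (Ordinal (ltn_pmod u l_gt0)).
  by move: hI hJ; rewrite /Defs.It /Defs.Jt /= modnDml !modn_mod addnC => -> ->.
by rewrite addnC; have [-> ->] := hp t; rewrite !eqxx.
Qed.

Lemma chain_e_spec :
  [/\ 0 < e, chain_period e & forall p, 0 < p < e -> ~ chain_period p].
Proof.
have hasl : has (is_shift_period l I J) (iota 1 l).
  apply/hasP; exists l; first by rewrite mem_iota l_gt0 add1n ltnSn.
  by apply/chain_periodP/chain_period_l.
have e_le : e <= l by move: hasl; rewrite has_find size_iota.
split=> //.
  by apply/chain_periodP; have := nth_find 0 hasl; rewrite nth_iota.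
move=> p /andP[p_gt0 p_lt] /chain_periodP hp.
have := @before_find _ 0 (is_shift_period l I J) (iota 1 l) p.-1.
rewrite nth_iota ?add1n ?prednK // ?hp; last by lia.
move=> before_e; suff: true = false by [].
by apply: before_e; move: p_lt; rewrite /chain_e; lia.
Qed.

Lemma chain_e_dvd t : chain_period t -> e %| t.
Proof.
have [e_gt0 he e_min] := chain_e_spec => ht.
have hr : chain_period (t %% e).
  by apply: (chain_periodDl (chain_period_mulr (t %/ e) he)); rewrite -divn_eq.
have [r0|r_gt0] := posnP (t %% e); first by rewrite /dvdn r0.
by case: (e_min _ _ hr); rewrite r_gt0 ltn_pmod.
Qed.

Lemma chain_n_spec : n * e = l /\ 0 < n.
Proof.
have [e_gt0 _ _] := chain_e_spec.
have e_dvd : e %| l := chain_e_dvd chain_period_l.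
split; first by rewrite divnK.
by rewrite divn_gt0 // dvdn_leq.
Qed.

End MinimalPeriod.

Section Cycles.
Variable B : 'I_k -> {set 'I_a}.
Hypothesis chainL : is_cycle_chain B s l I J.
Hypothesis allowL : allowable s l I J.

Local Notation cycle_of := (cycle_of s l I J).
Local Notation e := (chain_e l I J).
Local Notation n := (chain_n l I J).

Lemma chain_len_gt0 : 0 < l.
Proof. by case: chainL => /ltnW. Qed.

Lemma walk_offset_mull q : walk_offset (q * l) = 0%R.
Proof.
have offset_l : walk_offset l = 0%R.
  by case: chainL => _ [_ sum0]; rewrite walk_offsetE sum0 oppr0.
elim: q => [|q IHq] //.
by rewrite mulSn (walk_offsetD _ chain_period_l) offset_l IHq addr0.
Qed.

Lemma cnode_mull r q t : cnode r (q * l + t) = cnode r t.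
Proof. by rewrite cnode_shift ?walk_offset_mull ?addr0 //; apply: chain_period_mull. Qed.

Lemma vnode_mull r q t : vnode r (q * l + t) = vnode r t.
Proof. by rewrite vnode_shift ?walk_offset_mull ?addr0 //; apply: chain_period_mull. Qed.

Lemma eq_cnode r p q : p = q %[mod l] -> cnode r p = cnode r q.
Proof. by move=> pq; rewrite (divn_eq p l) (divn_eq q l) !cnode_mull pq. Qed.

Lemma eq_vnode r p q : p = q %[mod l] -> vnode r p = vnode r q.
Proof. by move=> pq; rewrite (divn_eq p l) (divn_eq q l) !vnode_mull pq. Qed.

Lemma mem_cycle_of r x : x \in cycle_of r <->
  exists t, x = (cnode r t, vnode r t) \/ x = (cnode r t.+1, vnode r t).
Proof.
rewrite inE; split; first by case/existsP => t /orP[] /eqP ->; exists t; [left|right].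
case=> t xt; apply/existsP; exists (Ordinal (ltn_pmod t chain_len_gt0)) => /=.
rewrite (eq_cnode r (modn_mod t l)) (eq_vnode r (modn_mod t l)).
by rewrite (eq_cnode r (modnS_mod l t)); case: xt => ->; rewrite eqxx ?orbT.
Qed.

Lemma cnode_inj r p q : cnode r p = cnode r q -> p = q %[mod l].
Proof.
rewrite -(eq_cnode r (modn_mod p l)) -(eq_cnode r (modn_mod q l)) => pq.
have [/(congr1 val) //|ne] := eqVneq (Ordinal (ltn_pmod p chain_len_gt0))
                                     (Ordinal (ltn_pmod q chain_len_gt0)).
by have [/eqP] := allowL r ne.
Qed.

Lemma vnode_inj r p q : vnode r p = vnode r q -> p = q %[mod l].
Proof.
rewrite -(eq_vnode r (modn_mod p l)) -(eq_vnode r (modn_mod q l)) => pq.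
have [/(congr1 val) //|ne] := eqVneq (Ordinal (ltn_pmod p chain_len_gt0))
                                     (Ordinal (ltn_pmod q chain_len_gt0)).
by have [_ /eqP] := allowL r ne.
Qed.

Lemma It_succ_neq u : It u.+1 != It u.
Proof.
case: chainL => _ [adj _]; have [_ _ + _] := adj _ (ltn_pmod u chain_len_gt0).
by rewrite /Defs.It modn_mod modnS_mod eq_sym.
Qed.

Lemma Jt_succ_neq u : Jt u.+1 != Jt u.
Proof.
case: chainL => _ [adj _]; have [_ _ _ +] := adj _ (ltn_pmod u chain_len_gt0).
by rewrite /Defs.Jt modn_mod modnS_mod eq_sym.
Qed.

Lemma cnode_succ_neq r u : cnode r u.+1 <> cnode r u.
Proof. by move/(congr1 fst)/eqP; rewrite /= (negbTE (It_succ_neq u)). Qed.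

Lemma vnode_succ_neq r u : vnode r u.+1 <> vnode r u.
Proof. by move/(congr1 fst)/eqP; rewrite /= (negbTE (Jt_succ_neq u)). Qed.

Lemma edge_at_vnode r c p :
  (c, vnode r p) \in cycle_of r -> c = cnode r p \/ c = cnode r p.+1.
Proof.
case/mem_cycle_of => t [] /pair_equal_spec[-> /vnode_inj pt].
  by left; apply/esym/eq_cnode.
by right; apply/esym/eq_cnode/eqP; rewrite eqn_modS pt.
Qed.

Lemma edge_at_cnode r v p :
  (cnode r p.+1, v) \in cycle_of r -> v = vnode r p.+1 \/ v = vnode r p.
Proof.
case/mem_cycle_of => t [] /pair_equal_spec[/cnode_inj pt ->].
  by left; apply/esym/eq_vnode.
by right; apply/esym/eq_vnode/eqP; rewrite -eqn_modS pt.
Qed.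

Lemma cycle_of_edge r t : (cnode r t, vnode r t) \in cycle_of r.
Proof. by apply/mem_cycle_of; exists t; left. Qed.

Lemma cycle_of_succ_edge r t : (cnode r t.+1, vnode r t) \in cycle_of r.
Proof. by apply/mem_cycle_of; exists t; right. Qed.

Section Subcycle.
Variables r r' : Zm m.
Hypothesis sub_r'r : cycle_of r' \subset cycle_of r.

(* Every edge of the walk from [r'] lies in [cycle_of r]; since consecutive
   walk nodes differ, each step must leave along the edge not just used. *)
Lemma walk_forward t : cnode r' 0 = cnode r t -> vnode r' 0 = vnode r t ->
  forall u, cnode r' u = cnode r (t + u) /\ vnode r' u = vnode r (t + u).
Proof.
move=> c0 v0; elim=> [|u [cu vu]]; first by rewrite addn0.
have := subsetP sub_r'r _ (cycle_of_succ_edge r' u).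
rewrite vu => /edge_at_vnode[|cu1].
  by rewrite -cu => /cnode_succ_neq.
have := subsetP sub_r'r _ (cycle_of_edge r' u.+1).
rewrite cu1 => /edge_at_cnode[vu1|]; first by rewrite addnS vu1.
by rewrite -vu => /vnode_succ_neq.
Qed.

Lemma walk_backward t : cnode r' 0 = cnode r t.+1 -> vnode r' 0 = vnode r t ->
  forall u, cnode r' u = cnode r (t + u * l.-1).+1 /\
            vnode r' u = vnode r (t + u * l.-1).
Proof.
have l_gt0 := chain_len_gt0.
have wrap u : (t + u.+1 * l.-1).+1 = 1 * l + (t + u * l.-1) by lia.
move=> c0 v0; elim=> [|u [cu vu]]; first by rewrite mul0n addn0.
have := subsetP sub_r'r _ (cycle_of_succ_edge r' u).
rewrite vu => /edge_at_vnode[cu1|]; last first.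
  by rewrite -cu => /cnode_succ_neq.
have {}cu1 : cnode r' u.+1 = cnode r (t + u.+1 * l.-1).+1.
  by rewrite cu1 wrap cnode_mull.
have := subsetP sub_r'r _ (cycle_of_edge r' u.+1).
rewrite cu1 => /edge_at_cnode[|->] //.
by rewrite wrap vnode_mull -vu => /vnode_succ_neq.
Qed.

End Subcycle.

(* A backward walk would make the chain invariant under the reflection
   [u |-> t + 1 - u] (mod [l]); at [u = t./2] this identifies two consecutive
   check indices ([t] even) or variable indices ([t] odd). *)
Lemma no_chain_reversal t :
  ~ (forall u, It u = It (t + u * l.-1).+1 /\ Jt u = Jt (t + u * l.-1)).
Proof.
have l_gt0 := chain_len_gt0.
move=> rev; move: (odd_double_half t) => /=; rewrite -mul2n.
move: (t./2) (odd t) => h odd_t th.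
have [Ih Jh] := rev h; have [Iper Jper] := chain_period_mull h h.+1.
case: odd_t th => /= th.
  move: Jh; rewrite (_ : t + h * l.-1 = h * l + h.+1); last by nia.
  by rewrite Jper => Jh; move: (Jt_succ_neq h); rewrite -Jh eqxx.
move: Ih; rewrite (_ : (t + h * l.-1).+1 = h * l + h.+1); last by nia.
by rewrite Iper => Ih; move: (It_succ_neq h); rewrite -Ih eqxx.
Qed.

Local Notation D := (walk_offset e).

Lemma walk_offset_mul_e q : walk_offset (q * e) = (D *+ q)%R.
Proof.
have [_ he _] := chain_e_spec chain_len_gt0.
elim: q => [|q IHq]; first by rewrite mul0n mulr0n.
by rewrite mulSn walk_offsetD // IHq mulrS.
Qed.

Lemma walk_offset_e_mul_n : (D *+ n = 0)%R.
Proof.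
have [ne _] := chain_n_spec chain_len_gt0.
by rewrite -walk_offset_mul_e ne -[l]mul1n walk_offset_mull.
Qed.

Lemma cycle_of_shift r p :
  chain_period p -> cycle_of (r + walk_offset p)%R = cycle_of r.
Proof.
have l_gt0 := chain_len_gt0.
have wrap u : p + (p * l.-1 + u) = p * l + u by nia.
move=> hp; apply/setP=> x; apply/idP/idP => /mem_cycle_of[t xt]; apply/mem_cycle_of.
  by exists (p + t); rewrite -addnS !cnode_shift // vnode_shift.
exists (p * l.-1 + t).
by rewrite -addnS -!cnode_shift // -vnode_shift // !wrap !cnode_mull vnode_mull.
Qed.

Lemma cycle_of_subset_orbit r r' :
  cycle_of r' \subset cycle_of r -> exists j : 'I_n, r' = (r + D *+ j)%R.
Proof.
move=> sub; have l_gt0 := chain_len_gt0.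
have [_ n_gt0] := chain_n_spec l_gt0.
have /mem_cycle_of[t [] /pair_equal_spec[c0 v0]] := subsetP sub _ (cycle_of_edge r' 0).
  have fwd := walk_forward sub c0 v0.
  have per_t : chain_period t.
    by move=> u; have [/(congr1 fst) /= -> /(congr1 fst) /= ->] := fwd u.
  have [q def_t] : exists q, t = q * e.
    by exists (t %/ e); rewrite divnK // chain_e_dvd.
  exists (Ordinal (ltn_pmod q n_gt0)) => /=.
  move: c0 => /(congr1 snd) /= ->; rewrite wx_offset def_t walk_offset_mul_e.
  by rewrite {1}(divn_eq q n) mulrnDr mulnC mulrnA walk_offset_e_mul_n mul0rn add0r.
case: (no_chain_reversal (t := t)) => u.
by have [/(congr1 fst) /= -> /(congr1 fst) /= ->] := walk_backward sub c0 v0 u.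
Qed.

Lemma walk_offset_e_mul_inj (i j : 'I_n) : (D *+ i = D *+ j)%R -> i = j.
Proof.
have l_gt0 := chain_len_gt0.
have [e_gt0 he _] := chain_e_spec l_gt0; have [ne _] := chain_n_spec l_gt0.
wlog ij : i j / i <= j.
  by move=> wlog_ij; case: (leqP i j) => [|/ltnW] ? ?; [|apply/esym]; apply: wlog_ij.
move=> Dij; apply/val_inj/eqP; rewrite eqn_leq ij leqNgt /=; apply/negP => lt_ij.
have D0 : walk_offset ((j - i) * e) = 0%R.
  rewrite walk_offset_mul_e; apply: (addrI (D *+ i)%R).
  by rewrite -mulrnDr subnKC ?Dij ?addr0.
have : cnode 0%R ((j - i) * e + 0) = cnode 0%R 0.
  by rewrite (cnode_shift _ _ (chain_period_mulr _ he)) D0 add0r.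
move/cnode_inj; rewrite addn0 mod0n modn_small; last first.
  have lt_ne : (j - i) * e < n * e.
    by rewrite ltn_pmul2r // (leq_ltn_trans (leq_subr i j)).
  by rewrite ne in lt_ne.
by move/eqP; rewrite muln_eq0 subn_eq0 leqNgt lt_ij eqn0Ngt e_gt0.
Qed.

Lemma card_cycle_of_fiber r : #|[set r' | cycle_of r' == cycle_of r]| = n.
Proof.
have [_ he _] := chain_e_spec chain_len_gt0.
have -> : [set r' | cycle_of r' == cycle_of r] = [set (r + D *+ j)%R | j : 'I_n].
  apply/setP=> r'; rewrite inE; apply/eqP/imsetP => [eq_r'r | [j _ ->]].
    have sub_r'r : cycle_of r' \subset cycle_of r by rewrite eq_r'r.
    by have [j ->] := cycle_of_subset_orbit sub_r'r; exists j.
  by rewrite -walk_offset_mul_e (cycle_of_shift _ (chain_period_mulr _ he)).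
by rewrite card_imset ?card_ord // => i j /addrI /walk_offset_e_mul_inj.
Qed.

End Cycles.
End Walk.

Theorem mainTheorem8 (m a k : nat) (B : 'I_k -> {set 'I_a})
    (s : 'I_a -> 'I_k -> 'I_((m.-1).+1)) (l : nat)
    (I : nat -> 'I_a) (J : nat -> 'I_k) :
  (0 < m)%N ->
  is_cycle_chain B s l I J ->
  allowable s l I J ->
  #|cycles_of_chain s l I J| = (m %/ chain_n l I J)%N.
Proof.
move=> m_gt0 chainL allowL.
have [_ n_gt0] := chain_n_spec I J (chain_len_gt0 chainL).
have := card_imset_mul_fiber (card_cycle_of_fiber chainL allowL).
rewrite card_ord /cycles_of_chain; move: #|_| => C card_eq.
by rewrite -(prednK m_gt0) -card_eq mulnK.
Qed.
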